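(* There is an absolute constant $c>0$ such that the following holds. Let $0<\varepsilon\le1$ and $1\le m\le n^{3/2-\varepsilon}$. If $\alpha\in\mathcal L$ is neither trivial nor a spider, then \[\frac{1}{n^{|E(\alpha)|/2}}\cdot n^{\frac{w(V(\alpha))-w(S_{\min})}{2}}\ \le\ \frac{1}{n^{c\,\varepsilon\,|E(\alpha)|}},\] where $S_{\min}$ is a minimum vertex separator of $\alpha$.
   Context: A shape $\alpha=(V(\alpha),E(\alpha),U_\alpha,V_\alpha)$ consists of a finite vertex set $V(\alpha)$, each vertex typed as a ''circle'' or a ''square''; a collection $E(\alpha)$ of edges, each joining a circle and a square and carrying a positive integer label; and two subsets $U_\alpha,V_\alpha\subseteq V(\alpha)$ (possibly intersecting). $W_\alpha=V(\alpha)\setminus(U_\alpha\cup V_\alpha)$. The shape is proper if it has no parallel edges. The degree $\deg(x)$ of a vertex is the sum of labels of incident edges, and $|E(\alpha)|$ denotes the sum of all edge labels. A shape is trivial if $U_\alpha=V_\alpha$, $W_\alpha=\emptyset$ and $E(\alpha)=\emptyset$. A left spider is a proper shape having two distinct squares $i,j\in U_\alpha$ of degree $1$ both adjacent to a common circle; a right spider is the same with $V_\alpha$ in place of $U_\alpha$; a spider is a left or right spider. For $S\subseteq V(\alpha)$, $w(S)=(\#\text{circles in }S)\log_n m+(\#\text{squares in }S)$. A vertex separator is a set $S\subseteq V(\alpha)$ such that every path from a vertex of $U_\alpha$ to a vertex of $V_\alpha$ (including length-zero paths, so $U_\alpha\cap V_\alpha\subseteq S$) contains a vertex of $S$; a minimum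 vertex separator minimizes $w$. $\mathcal L$ (depending on parameters $\delta,\tau>0$) is the set of proper shapes $\alpha$ such that: $U_\alpha,V_\alpha$ contain only squares and $|U_\alpha|,|V_\alpha|\le n^\delta$; $W_\alpha$ has no vertices of degree $0$; for every square $i$, $\deg(i)+\mathbf 1[i\in U_\alpha]+\mathbf 1[i\in V_\alpha]$ is even; every circle has even degree at least $4$; and $|E(\alpha)|\le n^\tau$. *)

From Stdlib Require Import Reals.
From mathcomp Require Import all_boot.
Set Implicit Arguments. Unset Strict Implicit. Unset Printing Implicit Defensive.

(* A shape on the finite vertex type V (V(alpha) is the whole of V).
   circ x = true means x is a circle, false means x is a square.
   edges: a list (multiset) of edges ((circle, square), label). *)
Record ashape (V : finType) := Shape {
  circ : V -> bool;
  edges : seq (V * V * nat);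
  Uset : {set V};
  Vset : {set V} }.

Section Shapes.
Variable V : finType.
Implicit Types (a : ashape V) (S : {set V}) (x y : V).

Definition shape_wf a : Prop :=
  forall e, e \in edges a -> [/\ circ a e.1.1, ~~ circ a e.1.2 & 0 < e.2]%N.

Definition Wset a : {set V} := ~: (Uset a :|: Vset a).

Definition proper a : bool := uniq [seq e.1 | e <- edges a].

Definition incident x (e : V * V * nat) : bool := (e.1.1 == x) || (e.1.2 == x).

Definition deg a x : nat := sumn [seq e.2 | e <- edges a & incident x e].

Definition total_E a : nat := sumn [seq e.2 | e <- edges a].

Definition adj a x y : bool :=
  has (fun e : V * V * nat => ((e.1.1 == x) && (e.1.2 == y)) || ((e.1.1 == y) && (e.1.2 == x)))
      (edges a).

Definition trivial_shape a : Prop :=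
  Uset a = Vset a /\ Wset a = set0 /\ edges a = [::].

Definition left_spider a : Prop :=
  proper a /\ exists i j c, [/\ i != j, i \in Uset a, j \in Uset a,
    ~~ circ a i & ~~ circ a j] /\ [/\ deg a i = 1%N, deg a j = 1%N, circ a c,
    adj a i c & adj a j c].

Definition right_spider a : Prop :=
  proper a /\ exists i j c, [/\ i != j, i \in Vset a, j \in Vset a,
    ~~ circ a i & ~~ circ a j] /\ [/\ deg a i = 1%N, deg a j = 1%N, circ a c,
    adj a i c & adj a j c].

Definition spider a : Prop := left_spider a \/ right_spider a.

Definition weight (n m : nat) a S : R :=
  INR #|[set x in S | circ a x]| * (ln (INR m) / ln (INR n))
  + INR #|[set x in S | ~~ circ a x]|.

Definition vertex_separator a S : Prop :=
  forall (u : V) (p : seq V), u \in Uset a -> last u p \in Vset a ->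
    path (adj a) u p -> exists2 x, x \in u :: p & x \in S.

Definition min_vertex_separator (n m : nat) a S : Prop :=
  vertex_separator a S /\
  forall S', vertex_separator a S' -> Rle (weight n m a S) (weight n m a S').

Definition in_L (n : nat) (delta tau : R) a : Prop :=
  shape_wf a /\ [/\ proper a,
      (forall x, x \in Uset a :|: Vset a -> ~~ circ a x),
      Rle (INR #|Uset a|) (Rpower (INR n) delta) /\ Rle (INR #|Vset a|) (Rpower (INR n) delta),
      (forall x, x \in Wset a -> deg a x <> 0%N) &
      [/\ (forall x, ~~ circ a x ->
             ~~ odd (deg a x + (x \in Uset a) + (x \in Vset a))),
          (forall x, circ a x -> ~~ odd (deg a x) /\ (4 <= deg a x)%N) &
          Rle (INR (total_E a)) (Rpower (INR n) tau)]].

End Shapes.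

From Pilot Require Import Defs.
From Stdlib Require Import Reals Lra Psatz.
From mathcomp Require Import all_boot.
Set Implicit Arguments. Unset Strict Implicit. Unset Printing Implicit Defensive.

(* Proof of Lemma 5.2, with c = 1/8.  Let S be a vertex separator of a non-spider shape alpha in L, and write E = |E(alpha)|,
   L = log_n m, C_out / C_in for the numbers of circles outside / inside S and
   Q for the number of squares outside S.  Then w(V) - w(S) = C_out L + Q, so
   the claim amounts to C_out L + Q <= (1 - eps/4) E.  It follows from
   L <= 3/2 - eps and two counting facts, both consequences of the
   handshake identity (the degrees of the circles, as well as those of the
   squares, add up to E):
   - every circle has degree >= 4, hence 4 (C_out + C_in) <= E;
   - every square outside S has positive degree, so 2 Q <= E + #leaves, where
     a leaf is a degree-1 square outside S.  A leaf lies in exactly one of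
     U, V (parity), so since alpha is not a spider and S separates U from V,
     a circle outside S is adjacent to at most one leaf and a circle in S to
     at most two: #leaves <= C_out + 2 C_in. *)

Section FinsetCounting.
Variable T : finType.

Lemma card_set_sum (A : {pred T}) (p : pred T) :
  #|[set x in A | p x]| = \sum_(x in A) p x.
Proof.
rewrite -sum1_card big_mkcond [RHS]big_mkcond /=.
by apply: eq_bigr => x _; rewrite !inE; case: (x \in A); case: (p x).
Qed.

Lemma card_set_split (S : {set T}) (p : pred T) :
  #|[set x in setT | p x]| = #|[set x in S | p x]| + #|[set x in ~: S | p x]|.
Proof.
by rewrite !card_set_sum (big_setID S) setTI setTD.
Qed.

End FinsetCounting.

Section ShapeCounting.
Variables (V : finType) (a : ashape V).

Lemma adjC x y : adj a x y = adj a y x.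
Proof. by apply: eq_has => e; rewrite orbC. Qed.

Lemma sum_deg_incidence (P : pred V) :
  \sum_(x | P x) deg a x = \sum_(e <- edges a) e.2 * #|[set x | P x & incident x e]|.
Proof.
rewrite /deg.
under eq_bigr => x _ do rewrite sumnE big_map big_filter big_mkcond.
rewrite exchange_big /=; apply: eq_bigr => e _.
rewrite -big_mkcondr sum_nat_const mulnC; congr (_ * _).
by apply: eq_card => x; rewrite !inE.
Qed.

Definition leaf x : bool := ~~ circ a x && (deg a x == 1).

Hypothesis wf : shape_wf a.

(* Handshake identities: each edge has exactly one circle and one square end. *)
Lemma handshake_circles : \sum_(x | circ a x) deg a x = total_E a.
Proof.
rewrite sum_deg_incidence /total_E sumnE big_map big_seq [RHS]big_seq.
apply: eq_bigr => e he; have [c1 c2 _] := wf he.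
suff -> : [set x | circ a x & incident x e] = [set e.1.1] by rewrite cards1 muln1.
apply/setP => x; rewrite !inE /incident.
have [->|_] := eqVneq x e.1.1; first by rewrite c1 ?eqxx.
by have [->|] := eqVneq x e.1.2; [rewrite (negbTE c2) | rewrite andbF].
Qed.

Lemma handshake_squares : \sum_(x | ~~ circ a x) deg a x = total_E a.
Proof.
rewrite sum_deg_incidence /total_E sumnE big_map big_seq [RHS]big_seq.
apply: eq_bigr => e he; have [c1 c2 _] := wf he.
suff -> : [set x | ~~ circ a x & incident x e] = [set e.1.2] by rewrite cards1 muln1.
apply/setP => x; rewrite !inE /incident.
have [->|_] := eqVneq x e.1.2; first by rewrite c2 ?eqxx ?orbT.
by have [->|] := eqVneq x e.1.1; [rewrite c1 | rewrite andbF].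
Qed.

Lemma circles_card_le :
  (forall x, circ a x -> 4 <= deg a x) -> 4 * #|[set x | circ a x]| <= total_E a.
Proof.
move=> deg4; rewrite -handshake_circles -sum1_card big_distrr /=.
rewrite (eq_bigl (fun x => circ a x)) => [|x]; last by rewrite inE.
by apply: leq_sum => x cx; rewrite muln1 deg4.
Qed.

Lemma leaf_neighbor d : leaf d -> exists2 c, circ a c & adj a d c.
Proof.
case/andP=> sd; rewrite /deg; case E: [seq e <- edges a | incident d e] => [|e s] //= _.
have : e \in [seq e <- edges a | incident d e] by rewrite E mem_head.
rewrite mem_filter => /andP[inc he]; have [c1 c2 _] := wf he.
move: inc; rewrite /incident; have [ed|_] /= := eqVneq e.1.1 d.
  by rewrite -ed c1 in sd.
move=> /eqP ed; exists e.1.1 => //; apply/hasP; exists e => //.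
by rewrite ed !eqxx orbT.
Qed.

Lemma leaves_unique_U : Defs.proper a -> ~ left_spider a ->
  forall d d' c, leaf d -> leaf d' -> d \in Uset a -> d' \in Uset a ->
    circ a c -> adj a d c -> adj a d' c -> d = d'.
Proof.
move=> pr nsp d d' c /andP[sd /eqP d1] /andP[sd' /eqP d1'] du du' cc h h'.
apply/eqP; apply: contraT => ne; apply: False_ind; apply: nsp; split=> //.
by exists d, d', c.
Qed.

Lemma leaves_unique_V : Defs.proper a -> ~ right_spider a ->
  forall d d' c, leaf d -> leaf d' -> d \in Vset a -> d' \in Vset a ->
    circ a c -> adj a d c -> adj a d' c -> d = d'.
Proof.
move=> pr nsp d d' c /andP[sd /eqP d1] /andP[sd' /eqP d1'] du du' cc h h'.
apply/eqP; apply: contraT => ne; apply: False_ind; apply: nsp; split=> //.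
by exists d, d', c.
Qed.

Hypothesis parity :
  forall x, ~~ circ a x -> ~~ odd (deg a x + (x \in Uset a) + (x \in Vset a)).

Lemma leaf_UV x : leaf x -> (x \in Vset a) = (x \notin Uset a).
Proof.
case/andP=> sx /eqP d1; move: (parity sx); rewrite d1.
by case: (x \in Uset a); case: (x \in Vset a).
Qed.

Section Separator.
Variable S : {set V}.
Hypothesis sep : vertex_separator a S.

(* Length-zero paths: U :&: V is contained in every separator. *)
Lemma separator_UV_mem x : x \in Uset a -> x \in Vset a -> x \in S.
Proof.
move=> xu xv; have [y] := sep (p := [::]) xu xv erefl.
by rewrite inE => /eqP ->.
Qed.

(* Length-two paths: a common neighbour of a U-vertex and a V-vertex outside S
   lies in S. *)
Lemma separator_common_neighbor d d' c :
  d \in Uset a -> d' \in Vset a -> d \notin S -> d' \notin S ->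
  adj a d c -> adj a d' c -> c \in S.
Proof.
move=> du dv nd nd' h1 h2.
have hp : path (adj a) d [:: c; d'] by rewrite /= h1 adjC h2.
have [y] := sep (p := [:: c; d']) du dv hp.
by rewrite !inE => /or3P[] /eqP -> // H; rewrite H in nd nd'.
Qed.

Hypothesis deg_W : forall x, x \in Wset a -> deg a x <> 0.

(* A square outside S has positive degree: if it were isolated, parity would
   put it in both U and V (hence in S) or in neither (hence in W). *)
Lemma square_outside_deg_pos x : ~~ circ a x -> x \notin S -> 0 < deg a x.
Proof.
move=> sx xS; rewrite lt0n; apply/eqP => d0; move: (parity sx); rewrite d0.
case hu: (x \in Uset a); case hv: (x \in Vset a) => //.
  by rewrite (separator_UV_mem hu hv) in xS.
by move=> _; apply: (deg_W (x := x)) => //; rewrite /Wset !inE hu hv.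
Qed.

Definition leaves : {set V} := [set x | leaf x & x \notin S].

Lemma leaves_at_circle c : Defs.proper a -> ~ spider a -> circ a c ->
  #|[set d in leaves | adj a d c]| <= 1 + (c \in S).
Proof.
move=> pr nsp cc.
have uniqU := leaves_unique_U pr (fun h => nsp (or_introl h)).
have uniqV := leaves_unique_V pr (fun h => nsp (or_intror h)).
case cS: (c \in S).
  rewrite -(cardsID (Uset a)) leq_add //; apply/card_le1_eqP => d' d; rewrite !inE.
    move=> /andP[/andP[/andP[ld' _] h'] du'] /andP[/andP[/andP[ld _] h] du].
    exact: (uniqU d d' c ld ld' du du' cc h h').
  move=> /andP[du' /andP[/andP[ld' _] h']] /andP[du /andP[/andP[ld _] h]].
  by apply: (uniqV d d' c ld ld' _ _ cc h h'); rewrite leaf_UV.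
apply/card_le1_eqP => d' d; rewrite !inE.
move=> /andP[/andP[ld' nd'] h'] /andP[/andP[ld nd] h].
have dV := leaf_UV ld; have d'V := leaf_UV ld'.
case du: (d \in Uset a); case du': (d' \in Uset a); rewrite du in dV; rewrite du' in d'V.
- exact: (uniqU d d' c ld ld' du du' cc h h').
- by rewrite (separator_common_neighbor du _ nd nd' h h') ?d'V in cS.
- by rewrite (separator_common_neighbor du' _ nd' nd h' h) ?dV in cS.
- by apply: (uniqV d d' c ld ld' _ _ cc h h'); rewrite ?dV ?d'V.
Qed.

(* Charging each leaf to an adjacent circle. *)
Lemma leaves_card_le : Defs.proper a -> ~ spider a ->
  #|leaves| <= #|[set x in ~: S | circ a x]| + 2 * #|[set x in S | circ a x]|.
Proof.
move=> pr nsp.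
have charge : #|leaves| <= \sum_(c | circ a c) #|[set d in leaves | adj a d c]|.
  under [in X in _ <= X]eq_bigr => c _ do rewrite card_set_sum.
  rewrite -sum1_card exchange_big /=; apply: leq_sum => d; rewrite inE => /andP[ld _].
  have [c cc h] := leaf_neighbor ld.
  by rewrite (bigD1 c) //= h.
apply: (leq_trans charge); apply: (@leq_trans (\sum_(c | circ a c) (1 + (c \in S)))).
  by apply: leq_sum => c cc; exact: leaves_at_circle.
rewrite !card_set_sum big_distrr /= [X in _ <= X + _]big_mkcond [X in _ <= _ + X]big_mkcond.
rewrite -big_split [X in X <= _]big_mkcond /=; apply: leq_sum => c _.
by rewrite !inE; case: (circ a c); case: (c \in S).
Qed.

(* Squares outside S have degree >= 2 except the leaves. *)
Lemma squares_outside_card_le :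
  2 * #|[set x in ~: S | ~~ circ a x]| <= total_E a + #|leaves|.
Proof.
rewrite -handshake_squares card_set_sum -sum1_card big_distrr /=.
rewrite big_mkcond [X in _ <= X + _]big_mkcond [X in _ <= _ + X]big_mkcond -big_split /=.
apply: leq_sum => x _; rewrite !inE /leaf.
case sx: (circ a x); first by rewrite muln0; case: ifP.
case xS: (x \in S) => //=; have := square_outside_deg_pos (negbT sx) (negbT xS).
by case: (deg a x) => [|[|k]].
Qed.

End Separator.
End ShapeCounting.

Lemma separator_counts (V : finType) (a : ashape V) (n : nat) (delta tau : R)
    (S : {set V}) :
  in_L n delta tau a -> ~ spider a -> vertex_separator a S ->
  2 * #|[set x in ~: S | ~~ circ a x]|
    <= total_E a + #|[set x in ~: S | circ a x]| + 2 * #|[set x in S | circ a x]|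
  /\ 4 * (#|[set x in ~: S | circ a x]| + #|[set x in S | circ a x]|) <= total_E a.
Proof.
move=> [wf [pr _ _ deg_W [parity deg_circ _]]] nsp sep; split.
  apply: leq_trans (squares_outside_card_le wf parity sep deg_W) _.
  by rewrite -addnA leq_add2l leaves_card_le.
rewrite addnC -card_set_split.
have -> : [set x in setT | circ a x] = [set x | circ a x] by apply/setP => x; rewrite !inE.
by apply: circles_card_le => // x /deg_circ[].
Qed.

Local Open Scope R_scope.

Lemma ln_le_compat (x y : R) : 0 < x -> x <= y -> ln x <= ln y.
Proof.
move=> x0 /Rle_lt_or_eq_dec[xy|<-]; last exact: Rle_refl.
by apply: Rlt_le; apply: ln_increasing.
Qed.

Lemma log_ratio_bounds (eps : R) (n m : nat) :
  (1 < n)%N -> (1 <= m)%N -> INR m <= Rpower (INR n) (3/2 - eps) ->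
  0 <= ln (INR m) / ln (INR n) <= 3/2 - eps.
Proof.
move=> /ltP hn /leP hm hmn.
have n1 : 1 < INR n by apply: (lt_INR 1).
have m1 : 1 <= INR m by apply: (le_INR 1).
have ln_n : 0 < ln (INR n) by rewrite -ln_1; apply: ln_increasing; lra.
have ln_m : 0 <= ln (INR m) by rewrite -ln_1; apply: ln_le_compat; lra.
have ln_mn : ln (INR m) <= (3/2 - eps) * ln (INR n).
  by rewrite -ln_Rpower; apply: ln_le_compat; lra.
have hL : ln (INR m) / ln (INR n) * ln (INR n) = ln (INR m) by field; lra.
split; apply: (Rmult_le_reg_r (ln (INR n))) => //; lra.
Qed.

Lemma weight_outside (n m : nat) (V : finType) (a : ashape V) (S : {set V}) :
  weight n m a setT - weight n m a S =
  INR #|[set x in ~: S | circ a x]| * (ln (INR m) / ln (INR n))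
  + INR #|[set x in ~: S | ~~ circ a x]|.
Proof.
by rewrite /weight (card_set_split S) (card_set_split S (fun x => ~~ circ a x)) !plus_INR; ring.
Qed.

Lemma separator_gain (eps L Co Ci Q E : R) :
  0 < eps <= 1 -> 0 <= L <= 3/2 - eps -> 0 <= Co -> 0 <= Ci ->
  2 * Q <= E + Co + 2 * Ci -> 4 * (Co + Ci) <= E ->
  Co * L + Q <= (1 - eps / 4) * E.
Proof.
move=> he hL hCo hCi hQ hE.
have hCoL : Co * L <= Co * (3/2 - eps) by apply: Rmult_le_compat_l; lra.
have slack : 0 <= (2 - eps) * (E - 4 * (Co + Ci)) by apply: Rmult_le_pos; lra.
have inner : 0 <= Ci * (1 - eps) by apply: Rmult_le_pos; lra.
nra.
Qed.

Theorem lemma5p2 :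
  exists c : R, Rlt 0 c /\
  forall (eps : R) (n m : nat) (delta tau : R),
    Rlt 0 eps -> Rle eps 1 -> (1 < n)%N -> (1 <= m)%N ->
    Rle (INR m) (Rpower (INR n) (Rminus (Rdiv 3 2) eps)) ->
    Rlt 0 delta -> Rlt 0 tau ->
    forall (V : finType) (a : ashape V) (Smin : {set V}),
      in_L n delta tau a -> ~ trivial_shape a -> ~ spider a ->
      min_vertex_separator n m a Smin ->
      Rle
        (Rmult (Rinv (Rpower (INR n) (Rdiv (INR (total_E a)) 2)))
               (Rpower (INR n)
                  (Rdiv (Rminus (weight n m a setT) (weight n m a Smin)) 2)))
        (Rinv (Rpower (INR n) (Rmult (Rmult c eps) (INR (total_E a))))).
Proof.
exists (1/8); split; first lra.
move=> eps n m delta tau he0 he1 hn hm hmn _ _ V a S aL _ nsp [sep _].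
have [hQ hC] := separator_counts aL nsp sep.
have [L0 L1] := log_ratio_bounds hn hm hmn.
have n1 : 1 < INR n by apply: (lt_INR 1); apply/ltP.
rewrite weight_outside -Rpower_Ropp -Rpower_plus -Rpower_Ropp.
apply: Rle_Rpower; first lra.
move/leP/le_INR: hQ; rewrite !mul2n -!addnn !plus_INR !Rplus_diag => hQ.
have four : INR 4 = 4 by rewrite /=; ring.
move/leP/le_INR: hC; rewrite mult_INR plus_INR four => hC.
have gain := separator_gain (conj he0 he1) (conj L0 L1) (pos_INR _) (pos_INR _) hQ hC.
lra.
Qed.
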